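(* Let $\alpha>0$, $\alpha\neq1$. For every unitary $U\in\mathcal{U}(d)$ and all Clifford unitaries $C_1,C_2\in\mathcal{C}_n(d_L)$, $H_\alpha(C_1UC_2)=H_\alpha(U)$.
   Context: Let $d_L\ge 2$, $n\ge1$, $d=d_L^n$. On $\mathbb{C}^{d_L}$ with computational basis $\{|k\rangle\}_{k\in\mathbb{Z}_{d_L}}$, let $Z|k\rangle=\omega^k|k\rangle$, $X|k\rangle=|k+1\rangle$ (mod $d_L$), $\omega=e^{2\pi i/d_L}$, $\tau=-e^{i\pi/d_L}$, $D_{(a_1,a_2)}=\tau^{a_1a_2}X^{a_1}Z^{a_2}$, and for $\mathbf a=\mathbf a_1\oplus\cdots\oplus\mathbf a_n\in\mathbb{Z}_{d_L}^{2n}$ let $D_{\mathbf a}=D_{\mathbf a_1}\otimes\cdots\otimes D_{\mathbf a_n}$ acting on $\mathbb{C}^d$. The Clifford group $\mathcal{C}_n(d_L)$ is the set of unitaries $C$ on $\mathbb{C}^d$ such that for every $\mathbf a$ there exist $s\in\mathbb{Z}_{d_L}$ and $\mathbf a'$ with $CD_{\mathbf a}C^\dagger=\omega^sD_{\mathbf a'}$. For a unitary $U$ let $\mathfrak{C}_{\mathbf{ab}}(U)=\frac1d\operatorname{tr}(D_{\mathbf a}^\dagger UD_{\mathbf b}U^\dagger)$, $\mathfrak{D}_{\mathbf{ab}}(U)=|\mathfrak{C}_{\mathbf{ab}}(U)|^2$, and $H_\alpha(U)=\frac{1}{\alpha-1}\Big(1-\frac{1}{d^2}\sum_{\mathbf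 a,\mathbf b}\mathfrak{D}_{\mathbf{ab}}(U)^\alpha\Big)$. *)

From HB Require Import structures.
From mathcomp Require Import all_boot all_order all_algebra.
From mathcomp Require Import all_classical all_reals.
From mathcomp Require Import exp trigo.
From mathcomp Require Import complex mxtens.

Set Implicit Arguments.
Unset Strict Implicit.
Unset Printing Implicit Defensive.

Import Order.TTheory GRing.Theory Num.Theory.
Local Open Scope ring_scope.
Local Open Scope complex_scope.

Section Weyl.
Variable R : realType.
Local Notation C := R[i].
Variable dL : nat.

Definition omega : C := cos (2 * pi / dL%:R) +i* sin (2 * pi / dL%:R).
Definition tau : C := - (cos (pi / dL%:R) +i* sin (pi / dL%:R)).

Definition Zmx : 'M[C]_dL := \matrix_(i, j) ((i == j)%:R * omega ^+ i).
Definition Xmx : 'M[C]_dL := \matrix_(i, j) ((i == (j.+1 %% dL)%N :> nat)%:R).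

Definition mxpow {m} (A : 'M[C]_m) (k : nat) : 'M[C]_m := iter k (mulmx A) 1%:M.

Definition D1 (a : 'I_dL * 'I_dL) : 'M[C]_dL :=
  tau ^+ (a.1 * a.2) *: (mxpow Xmx a.1 *m mxpow Zmx a.2).

Fixpoint tensn (f : nat -> 'M[C]_dL) (k : nat) : 'M[C]_(dL ^ k) :=
  match k with
  | 0 => 1%:M
  | k'.+1 => castmx (esym (expnSr dL k'), esym (expnSr dL k'))
                    (tensn f k' *t f k')
  end.

Variable n : nat.

(* a = a_1 (+) ... (+) a_n in Z_dL^{2n} *)
Definition pidx := {ffun 'I_n -> 'I_dL * 'I_dL}.

Definition Dop (a : pidx) : 'M[C]_(dL ^ n) :=
  tensn (fun k => match insub k with Some i => D1 (a i) | None => 1%:M end) n.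

Definition adj {m} (A : 'M[C]_m) : 'M[C]_m := (map_mx conjc A)^T.

Definition unitary (U : 'M[C]_(dL ^ n)) : Prop := U *m adj U = 1%:M.

Definition clifford (Cl : 'M[C]_(dL ^ n)) : Prop :=
  unitary Cl /\
  forall a : pidx, exists (s : 'I_dL) (a' : pidx),
    Cl *m Dop a *m adj Cl = omega ^+ s *: Dop a'.

Definition fC (U : 'M[C]_(dL ^ n)) (a b : pidx) : C :=
  (dL ^ n)%:R^-1 * \tr (adj (Dop a) *m U *m Dop b *m adj U).

Definition fD (U : 'M[C]_(dL ^ n)) (a b : pidx) : R := (complex.Re `|fC U a b|) ^+ 2.

Definition Halpha (alpha : R) (U : 'M[C]_(dL ^ n)) : R :=
  (alpha - 1)^-1 *
  (1 - ((dL ^ n)%:R ^+ 2)^-1 * \sum_(a : pidx) \sum_(b : pidx) fD U a b `^ alpha).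

End Weyl.

From HB Require Import structures.
From mathcomp Require Import all_boot all_order all_algebra.
From mathcomp Require Import all_classical all_reals.
From mathcomp Require Import exp trigo.
From mathcomp Require Import complex mxtens.
From mathcomp Require Import ring lra.
Set Implicit Arguments.
Unset Strict Implicit.
Unset Printing Implicit Defensive.

Import Order.TTheory GRing.Theory Num.Theory.
Local Open Scope ring_scope.
Local Open Scope complex_scope.

(* Conjugation by a Clifford unitary C permutes the Weyl operators up to phases
   of modulus one: C D_a C^dag = omega^(s a) D_(phi a).  Distinct Weyl operators
   are never proportional (compare their entries factor by factor in the tensor
   product), so phi is injective, i.e. a permutation of Z_dL^2n.  Moving C1 and
   C2 around the trace gives fC (C1 U C2) (phi1 a) b = (phase) * fC U a (phi2 b),
   so fD (C1 U C2) is fD U with both indices permuted, and the sum defining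
   H_alpha is unchanged. *)

Section ConjugateTranspose.
Variable R : realType.

Lemma adjM m (A B : 'M[R[i]]_m) : adj (A *m B) = adj B *m adj A.
Proof. by rewrite /adj map_mxM trmx_mul. Qed.

Lemma adjZ m (c : R[i]) (A : 'M[R[i]]_m) : adj (c *: A) = c^* *: adj A.
Proof. by rewrite /adj map_mxZ; apply/matrixP=> i j; rewrite !mxE. Qed.

Lemma adjK m : involutive (@adj R m).
Proof.
by move=> A; rewrite /adj map_trmx trmxK -map_mx_comp map_mx_id // => x; rewrite /= conjcK.
Qed.

Lemma unitary_conjK m (C X : 'M[R[i]]_m) :
  adj C *m C = 1%:M -> adj C *m (C *m X *m adj C) *m C = X.
Proof. by move=> CK; rewrite !mulmxA CK mul1mx -mulmxA CK mulmx1. Qed.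

Definition mxcorr m (U A B : 'M[R[i]]_m) : R[i] := \tr (adj A *m U *m B *m adj U).

Lemma mxcorr_mul m (C1 U C2 A B : 'M[R[i]]_m) :
  mxcorr (C1 *m U *m C2) A B = mxcorr U (adj C1 *m A *m C1) (C2 *m B *m adj C2).
Proof.
by rewrite /mxcorr !adjM adjK !mulmxA -mxtrace_mulC !mulmxA.
Qed.

Lemma mxcorrZ m (U A B : 'M[R[i]]_m) x y :
  mxcorr U (x *: A) (y *: B) = x^* * y * mxcorr U A B.
Proof.
by rewrite /mxcorr adjZ -!scalemxAl -scalemxAr -!scalemxAl !mxtraceZ mulrA.
Qed.

End ConjugateTranspose.

Section TensorProportionality.
Variable K : fieldType.

Lemma mx_neq0_entry m n (A : 'M[K]_(m, n)) : A != 0 -> exists i j, A i j != 0.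
Proof.
move=> /eqP A_neq0; apply: contrapT => A_zero; apply: A_neq0.
apply/matrixP => i j; rewrite mxE.
by have [//|Aij] := eqVneq (A i j) 0; case: A_zero; exists i, j.
Qed.

Lemma tensmx_neq0 m1 n1 m2 n2 (A : 'M[K]_(m1, n1)) (B : 'M[K]_(m2, n2)) :
  A != 0 -> B != 0 -> A *t B != 0.
Proof.
move=> /mx_neq0_entry [i [j Aij]] /mx_neq0_entry [k [l Bkl]].
apply/eqP => /matrixP /(_ (mxtens_index (i, k)) (mxtens_index (j, l))) /eqP.
by rewrite tensmxE mxE mulf_eq0 (negbTE Aij) (negbTE Bkl).
Qed.

Lemma tensmx_scale_factorr m1 n1 m2 n2 (A A' : 'M[K]_(m1, n1))
    (B B' : 'M[K]_(m2, n2)) mu :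
  A *t B = mu *: (A' *t B') -> A != 0 -> exists nu, B = nu *: B'.
Proof.
move=> /matrixP eAB /mx_neq0_entry [i [j Aij]].
exists (mu * A' i j / A i j); apply/matrixP => k l; apply: (mulfI Aij).
have := eAB (mxtens_index (i, k)) (mxtens_index (j, l)).
by rewrite tensmxE mxE tensmxE mxE => ->; field.
Qed.

Lemma tensmx_scale_factorl m1 n1 m2 n2 (A A' : 'M[K]_(m1, n1))
    (B B' : 'M[K]_(m2, n2)) mu :
  A *t B = mu *: (A' *t B') -> B != 0 -> exists nu, A = nu *: A'.
Proof.
move=> /matrixP eAB /mx_neq0_entry [k [l Bkl]].
exists (mu * B' k l / B k l); apply/matrixP => i j; apply: (mulIf Bkl).
have := eAB (mxtens_index (i, k)) (mxtens_index (j, l)).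
by rewrite tensmxE mxE tensmxE mxE => ->; field.
Qed.

Lemma castmxZ m1 n1 m2 n2 (e : (m1 = m2) * (n1 = n2)) c (A : 'M[K]_(m1, n1)) :
  castmx e (c *: A) = c *: castmx e A.
Proof. by apply/matrixP => i j; rewrite castmxE !mxE castmxE. Qed.

Lemma castmx_eq0 m1 n1 m2 n2 (e : (m1 = m2) * (n1 = n2)) (A : 'M[K]_(m1, n1)) :
  (castmx e A == 0) = (A == 0).
Proof.
have castmx0 : castmx e (0 : 'M[K]_(m1, n1)) = 0.
  by apply/matrixP => i j; rewrite castmxE !mxE.
by case: e castmx0 => e1 e2 <-; rewrite (can_eq (castmxK e1 e2)).
Qed.

End TensorProportionality.

Section PhaseFactors.
Variable R : realType.

Definition cis (t : R) : R[i] := cos t +i* sin t.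

Lemma cisD (s t : R) : cis s * cis t = cis (s + t).
Proof.
by rewrite /cis cosD sinD; apply/eqP; rewrite eq_complex /= eqxx addrC eqxx.
Qed.

Lemma cisX (t : R) k : cis t ^+ k = cis (t *+ k).
Proof.
elim: k => [|k IHk]; first by rewrite /cis cos0 sin0.
by rewrite exprS IHk cisD mulrS.
Qed.

Lemma norm_cis (t : R) : `|cis t| = 1.
Proof. by rewrite normc_def /= cos2Dsin2 sqrtr1. Qed.

Lemma cos_mulr2n_lt1 (y : R) : 0 < y < pi -> cos (y *+ 2) < 1.
Proof.
move=> /sin_gt0_pi sin_gt0; rewrite cos_mulr2n cos2sin2 mulr2n; nra.
Qed.

End PhaseFactors.

Section WeylOperators.
Variables (R : realType) (dL : nat).
Hypothesis dL_gt1 : (1 < dL)%N.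
Let dL_gt0 : (0 < dL)%N := ltnW dL_gt1.

Local Notation omega := (omega R dL).
Local Notation tau := (tau R dL).

Lemma norm_omegaX k : `|omega ^+ k| = 1.
Proof. by rewrite normrX norm_cis expr1n. Qed.

Lemma omegaX_neq0 k : omega ^+ k != 0.
Proof. by rewrite -normr_eq0 norm_omegaX oner_eq0. Qed.

Lemma tauX_neq0 k : tau ^+ k != 0.
Proof.
by rewrite expf_eq0 oppr_eq0 -normr_eq0 andbC [`|_|]norm_cis oner_eq0.
Qed.

Lemma omegaX_neq1 k : (0 < k < dL)%N -> omega ^+ k != 1.
Proof.
move=> /andP[k_gt0 k_lt_dL]; set y : R := (pi / dL%:R) *+ k.
have y_in : 0 < y < pi.
  rewrite /y -mulr_natr -mulrA pmulr_rgt0 ?gtr_pMr ?pi_gt0 // mulrC.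
  by rewrite divr_gt0 ?ltr0n // ltr_pdivrMr ?ltr0n // mul1r ltr_nat.
have -> : omega ^+ k = cis (y *+ 2).
  by rewrite cisX -mulrnA mulnC mulrnA mulr2n; congr (cis (_ *+ k)); ring.
apply/eqP => /(congr1 (@complex.Re R)) /= cos_eq1.
by have := cos_mulr2n_lt1 y_in; rewrite cos_eq1 ltxx.
Qed.

Lemma omegaX_inj j k : (j < dL)%N -> (k < dL)%N -> omega ^+ j = omega ^+ k -> j = k.
Proof.
wlog jk : j k / (j <= k)%N.
  move=> wlog_jk j_lt k_lt e; have [jk|/ltnW kj] := leqP j k; first exact: wlog_jk.
  exact/esym/wlog_jk.
move=> _ k_lt e; apply/eqP; rewrite eqn_leq jk leqNgt; apply/negP => j_lt_k.
have /omegaX_neq1 : (0 < k - j < dL)%N.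
  by rewrite subn_gt0 j_lt_k (leq_ltn_trans (leq_subr _ _) k_lt).
apply/negP/negPn/eqP/(mulfI (omegaX_neq0 j)).
by rewrite -exprD subnKC // mulr1.
Qed.

Lemma mxpowXE k (i j : 'I_dL) :
  mxpow (Xmx R dL) k i j = (i == (j + k) %% dL :> nat)%N%:R.
Proof.
elim: k i => [|k IHk] i; first by rewrite /= mxE addn0 modn_small.
rewrite /= mxE (bigD1 (Ordinal (ltn_pmod (j + k) dL_gt0))) //= big1 ?addr0.
  by rewrite IHk mxE /= eqxx mulr1 -addn1 modnDml addn1 addnS.
move=> l; rewrite -val_eqE /= IHk mxE => /negbTE ->; exact: mulr0.
Qed.

Lemma mxpowZE k (i j : 'I_dL) :
  mxpow (Zmx R dL) k i j = (i == j)%:R * omega ^+ (i * k).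
Proof.
elim: k i => [|k IHk] i; first by rewrite /= mxE muln0 mulr1.
rewrite /= mxE (bigD1 i) //= big1 ?addr0 => [|l]; last first.
  by rewrite mxE eq_sym => /negbTE ->; rewrite !mul0r.
by rewrite IHk mxE eqxx mul1r mulrCA -exprD mulnS.
Qed.

Lemma D1E (a : 'I_dL * 'I_dL) (i j : 'I_dL) :
  D1 R a i j =
    (i == (j + a.1) %% dL :> nat)%N%:R * (tau ^+ (a.1 * a.2) * omega ^+ (j * a.2)).
Proof.
rewrite mxE mxE (bigD1 j) //= big1 ?addr0 => [|l jl]; last first.
  by rewrite mxpowZE (negbTE jl) mul0r mulr0.
by rewrite mxpowXE mxpowZE eqxx mul1r mulrCA.
Qed.

Lemma D1_neq0 (a : 'I_dL * 'I_dL) : D1 R a != 0.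
Proof.
apply/eqP => /matrixP /(_ a.1 (Ordinal dL_gt0)) /eqP.
rewrite D1E mxE add0n modn_small // eqxx mul1r mulf_eq0.
by rewrite (negbTE (tauX_neq0 _)) (negbTE (omegaX_neq0 _)).
Qed.

Lemma eq_D1_scale (a b : 'I_dL * 'I_dL) nu : D1 R a = nu *: D1 R b -> a = b.
Proof.
move=> /matrixP eab.
have := eab a.1 (Ordinal dL_gt0).
rewrite D1E mxE D1E /= !add0n !modn_small // eqxx mul0n !mulr1 mul1r.
have [a1b1 col0|_] := eqVneq (a.1 : nat) b.1; last first.
  by rewrite mul0r mulr0 => /eqP; rewrite (negbTE (tauX_neq0 _)).
rewrite mul1r -a1b1 in col0.
have := eab (Ordinal (ltn_pmod (1 + a.1) dL_gt0)) (Ordinal dL_gt1).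
rewrite D1E mxE D1E /= -a1b1 eqxx !mul1r !mul1n mulrA -col0.
move=> /(mulfI (tauX_neq0 _)) /(omegaX_inj (ltn_ord _) (ltn_ord _)) /val_inj.
by case: a b a1b1 {eab col0} => [? ?] [? ?] /= /val_inj -> ->.
Qed.

Lemma tensn_neq0 (f : nat -> 'M[R[i]]_dL) k :
  (forall i, (i < k)%N -> f i != 0) -> tensn f k != 0.
Proof.
elim: k => [|k IHk] f_neq0 /=.
  by apply/eqP => /matrixP /(_ ord0 ord0) /eqP; rewrite !mxE oner_eq0.
rewrite castmx_eq0 tensmx_neq0 ?f_neq0 // IHk // => i /ltnW; exact: f_neq0.
Qed.

Lemma tensn_scale_factor (f g : nat -> 'M[R[i]]_dL) k mu :
  (forall i, (i < k)%N -> f i != 0) -> tensn f k = mu *: tensn g k ->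
  forall i, (i < k)%N -> exists nu, f i = nu *: g i.
Proof.
elim: k mu => [//|k IHk] mu f_neq0 /= efg i.
have {}efg : tensn f k *t f k = mu *: (tensn g k *t g k).
  by rewrite -[LHS](castmxK (esym (expnSr dL k)) (esym (expnSr dL k))) efg castmxZ castmxK.
have f_neq0' j : (j < k)%N -> f j != 0 by move/ltnW; exact: f_neq0.
rewrite ltnS leq_eqVlt => /predU1P [->|i_lt_k].
  exact: tensmx_scale_factorr efg (tensn_neq0 f_neq0').
have [nu efg_k] := tensmx_scale_factorl efg (f_neq0 k (ltnSn k)).
exact: IHk f_neq0' efg_k i i_lt_k.
Qed.

Variable n : nat.

Lemma eq_Dop_scale (a b : pidx dL n) mu : Dop R a = mu *: Dop R b -> a = b.
Proof.
move=> /tensn_scale_factor factor; apply/ffunP => i.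
have [|nu] := factor _ i (ltn_ord i); last by rewrite valK => /eq_D1_scale.
by move=> k k_lt_n; rewrite insubT; exact: D1_neq0.
Qed.

End WeylOperators.

Lemma sum2_reindex_inj (I : finType) (V : nmodType) (F G : I -> I -> V) (h k : I -> I) :
  injective h -> injective k -> (forall a b, F (h a) b = G a (k b)) ->
  \sum_a \sum_b F a b = \sum_a \sum_b G a b.
Proof.
move=> h_inj k_inj eFG; rewrite (reindex_inj h_inj); apply: eq_bigr => a _.
by rewrite [RHS](reindex_inj k_inj); apply: eq_bigr => b _.
Qed.

Section CliffordConjugation.
Variables (R : realType) (dL n : nat).
Hypothesis dL_gt1 : (1 < dL)%N.

Local Notation omega := (omega R dL).
Local Notation Dop := (@Dop R dL n).

Lemma clifford_adjmxK (C : 'M[R[i]]_(dL ^ n)) : clifford C -> adj C *m C = 1%:M.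
Proof. by case=> /mulmx1C. Qed.

Lemma clifford_action (C : 'M[R[i]]_(dL ^ n)) : clifford C ->
  exists (s : pidx dL n -> 'I_dL) (phi : pidx dL n -> pidx dL n),
    injective phi /\ forall a, C *m Dop a *m adj C = omega ^+ s a *: Dop (phi a).
Proof.
move=> CC; have CK := clifford_adjmxK CC; case: CC => _ CD.
have /choice [f Cf] : forall a, exists p : 'I_dL * pidx dL n,
    C *m Dop a *m adj C = omega ^+ p.1 *: Dop p.2.
  by move=> a; have [s [a' e]] := CD a; exists (s, a').
exists (fun a => (f a).1), (fun a => (f a).2); split=> // a1 a2 f12.
have Dop_back a : Dop a = omega ^+ (f a).1 *: (adj C *m Dop (f a).2 *m C).
  by rewrite scalemxAl scalemxAr -Cf unitary_conjK.
apply: (@eq_Dop_scale _ _ dL_gt1 _ _ _ (omega ^+ (f a1).1 / omega ^+ (f a2).1)).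
by rewrite (Dop_back a1) (Dop_back a2) f12 scalerA mulfVK ?omegaX_neq0.
Qed.

Lemma fCE (U : 'M[R[i]]_(dL ^ n)) a b :
  fC U a b = (dL ^ n)%:R^-1 * mxcorr U (Dop a) (Dop b).
Proof. by []. Qed.

Lemma fC_conj_mul (C1 U C2 : 'M[R[i]]_(dL ^ n)) a a' b b' c1 c2 :
  adj C1 *m C1 = 1%:M -> c1 != 0 ->
  C1 *m Dop a *m adj C1 = c1 *: Dop a' ->
  C2 *m Dop b *m adj C2 = c2 *: Dop b' ->
  fC (C1 *m U *m C2) a' b = (c1^-1)^* * c2 * fC U a b'.
Proof.
move=> C1K c1_neq0 e1 e2.
have Da' : adj C1 *m Dop a' *m C1 = c1^-1 *: Dop a.
  by rewrite -[Dop a'](scalerK c1_neq0) -e1 -scalemxAr -scalemxAl unitary_conjK.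
by rewrite !fCE mxcorr_mul Da' e2 mxcorrZ mulrCA.
Qed.

Lemma fD_conj_mul (C1 U C2 : 'M[R[i]]_(dL ^ n)) a a' b b' c1 c2 :
  adj C1 *m C1 = 1%:M -> `|c1| = 1 -> `|c2| = 1 ->
  C1 *m Dop a *m adj C1 = c1 *: Dop a' ->
  C2 *m Dop b *m adj C2 = c2 *: Dop b' ->
  fD (C1 *m U *m C2) a' b = fD U a b'.
Proof.
move=> C1K c1_unit c2_unit e1 e2.
have c1_neq0 : c1 != 0 by rewrite -normr_eq0 c1_unit oner_eq0.
rewrite /fD (fC_conj_mul U C1K c1_neq0 e1 e2).
by rewrite normrM normrM normcJ normfV c1_unit c2_unit invr1 mulr1 mul1r.
Qed.

End CliffordConjugation.

Theorem theorem2 (R : realType) (dL n : nat) (hdL : (2 <= dL)%N) (hn : (1 <= n)%N)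
  (alpha : R) (halpha : 0 < alpha) (halpha1 : alpha != 1)
  (U C1 C2 : 'M[R[i]]_(dL ^ n)) :
  unitary U -> clifford C1 -> clifford C2 ->
  Halpha alpha (C1 *m U *m C2) = Halpha alpha U.
Proof.
move=> _ CC1 CC2.
have [s1 [phi1 [phi1_inj e1]]] := clifford_action hdL CC1.
have [s2 [phi2 [phi2_inj e2]]] := clifford_action hdL CC2.
rewrite /Halpha; apply: (congr1 (fun S => (alpha - 1)^-1 * (1 - ((dL ^ n)%:R ^+ 2)^-1 * S))).
apply: (@sum2_reindex_inj _ _ (fun a b => fD (C1 *m U *m C2) a b `^ alpha)
  (fun a b => fD U a b `^ alpha) _ _ phi1_inj phi2_inj) => a b.
by rewrite (fD_conj_mul U (clifford_adjmxK CC1) _ _ (e1 a) (e2 b)) ?norm_omegaX.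
Qed.
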